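(* Let $d\ge2$, let $G$ be a closed germ, and let $s\in S_{\rm o}$. Then $s\in G$ if and only if the polar point $s^*$ lies on the boundary (relative to the hyperplane $H$) of the polar set $G^*$.
   Context: Fix an integer $d\ge 2$. $\langle\cdot,\cdot\rangle$ is the standard inner product on $\mathbb{R}^{d^2}$, $\|\cdot\|$ the Euclidean norm. $\Delta=\{p\in\mathbb{R}^{d^2}: p(i)\ge0,\ \sum_ip(i)=1\}$; $H=\{u\in\mathbb{R}^{d^2}:\sum_i u(i)=1\}$; $c=(1/d^2,\dots,1/d^2)$. For $A\subseteq H$ the polar is $A^*=\{u\in H:\langle u,v\rangle\ge\frac{1}{d(d+1)}\ \forall v\in A\}$. Radii: $r_{\rm o}^2=\frac{d-1}{d^2(d+1)}$, $r_{\rm i}^2=\frac{1}{d^2(d^2-1)}$. Out-sphere $S_{\rm o}=\{u\in H:\|u-c\|=r_{\rm o}\}$. For $s\in H$, $s\neq c$, the polar point of $s$ is $s^*=c-\frac{r_{\rm o}r_{\rm i}}{\|s-c\|^2}(s-c)$. A subset $A\subseteq\Delta$ is a germ if $\frac{1}{d(d+1)}\le\langle p,s\rangle\le\frac{2}{d(d+1)}$ for all $p,s\in A$. *)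

From Stdlib Require Import Reals.
From mathcomp Require Import all_boot.
Set Implicit Arguments. Unset Strict Implicit.

Local Open Scope R_scope.

Definition vec (d : nat) := 'I_(d * d) -> R.

Definition sumv (d : nat) (f : vec d) : R := \big[Rplus/0]_(i < d * d) f i.

Definition inner (d : nat) (u v : vec d) : R := sumv (fun i => u i * v i).

Definition vnorm (d : nat) (u : vec d) : R := sqrt (inner u u).

Definition vsub (d : nat) (u v : vec d) : vec d := fun i => u i - v i.

Definition Delta (d : nat) (p : vec d) : Prop :=
  (forall i, 0 <= p i) /\ sumv p = 1.

Definition Hyp (d : nat) (u : vec d) : Prop := sumv u = 1.

Definition cen (d : nat) : vec d := fun _ => 1 / (INR d ^ 2).

Definition polar (d : nat) (A : vec d -> Prop) (u : vec d) : Prop :=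
  Hyp u /\ forall v, A v -> 1 / (INR d * (INR d + 1)) <= inner u v.

Definition r_out (d : nat) : R :=
  sqrt ((INR d - 1) / (INR d ^ 2 * (INR d + 1))).

Definition r_in (d : nat) : R :=
  sqrt (1 / (INR d ^ 2 * (INR d ^ 2 - 1))).

Definition S_out (d : nat) (u : vec d) : Prop :=
  Hyp u /\ vnorm (vsub u (@cen d)) = r_out d.

Definition polar_point (d : nat) (s : vec d) : vec d :=
  fun i => @cen d i
           - (r_out d * r_in d / (vnorm (vsub s (@cen d))) ^ 2) * (s i - @cen d i).

Definition germ (d : nat) (A : vec d -> Prop) : Prop :=
  (forall p, A p -> Delta p) /\
  (forall p s, A p -> A s ->
     1 / (INR d * (INR d + 1)) <= inner p s <= 2 / (INR d * (INR d + 1))).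

Definition closed_vset (d : nat) (A : vec d -> Prop) : Prop :=
  forall x : vec d,
    (forall eps, 0 < eps -> exists y, A y /\ vnorm (vsub x y) < eps) -> A x.

Definition rel_boundary_H (d : nat) (B : vec d -> Prop) (x : vec d) : Prop :=
  Hyp x /\
  forall eps, 0 < eps ->
    (exists y, Hyp y /\ B y /\ vnorm (vsub x y) < eps) /\
    (exists z, Hyp z /\ ~ B z /\ vnorm (vsub x z) < eps).

(* Write λ := r_i / r_o, the coefficient turning s into s^* = c - λ (s - c) when
   |s - c| = r_o.  Every point of the out-sphere has |s|^2 = 2/(d(d+1)), the largest
   value a germ allows, and expanding |s - v|^2 gives, for v in H,
     <s^*, v> = 1/(d(d+1)) + λ/2 (|s - v|^2 + 2/(d(d+1)) - |v|^2).
   Hence s^* lies in G^*, with a margin λ/2 |s - v|^2 over each v in G.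
   If s is in G, the margin vanishes at v = s, so moving s^* slightly further along
   the ray from c leaves G^*.  If s is not in G, closedness keeps G at distance eps
   from s, the margin is at least λ eps^2 / 2, and since |v| <= 1 on G a whole
   H-ball around s^* stays in G^*. *)
From Stdlib Require Import Reals Lra Psatz Classical.
From mathcomp Require Import all_boot.
Set Implicit Arguments. Unset Strict Implicit.
Local Open Scope R_scope.

Definition vscale (d : nat) (a : R) (u : vec d) : vec d := fun i => a * u i.

Definition ray (d : nat) (s : vec d) (t : R) : vec d :=
  vsub (@cen d) (vscale t (vsub s (@cen d))).

Section VectorAlgebra.

Variable d : nat.
Implicit Types (u v w : vec d) (a b : R).

Lemma sumv_ext (f g : vec d) : (forall i, f i = g i) -> sumv f = sumv g.
Proof. by move=> fg; apply: eq_bigr => i _; apply: fg. Qed.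

Lemma sumv_comb a b u v : sumv (fun i => a * u i + b * v i) = a * sumv u + b * sumv v.
Proof. by rewrite /sumv; elim/big_rec3: _ => [|i x y z _ ->]; ring. Qed.

Lemma sumv_scale a u : sumv (vscale a u) = a * sumv u.
Proof.
rewrite -[a * _]Rplus_0_r -(Rmult_0_l (sumv u)) -sumv_comb.
by apply: sumv_ext => i; rewrite /vscale; ring.
Qed.

Lemma sumv_sub u v : sumv (vsub u v) = sumv u - sumv v.
Proof.
rewrite (@sumv_ext _ (fun i => 1 * u i + (-1) * v i)) ?sumv_comb; first ring.
by move=> i; rewrite /vsub; ring.
Qed.

Lemma sumv_const k : sumv (fun _ : 'I_(d * d) => k) = INR (d * d) * k.
Proof.
rewrite /sumv big_const_ord.
by elim: (d * d)%nat => [|n IH]; [rewrite /=; ring | rewrite iterS IH S_INR; ring].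
Qed.

Lemma sumv_ge0 u : (forall i, 0 <= u i) -> 0 <= sumv u.
Proof. by move=> u_ge0; apply: big_ind => //; [lra | move=> *; lra]. Qed.

Lemma inner_ext u u' v v' :
  (forall i, u i = u' i) -> (forall i, v i = v' i) -> inner u v = inner u' v'.
Proof. by move=> uu vv; apply: sumv_ext => i; rewrite uu vv. Qed.

Lemma inner_comm u v : inner u v = inner v u.
Proof. by apply: sumv_ext => i; ring. Qed.

Lemma inner_ge0 u : 0 <= inner u u.
Proof. by apply: sumv_ge0 => i; nra. Qed.

Lemma inner_subl u w v : inner (vsub u w) v = inner u v - inner w v.
Proof.
rewrite /inner -sumv_sub; apply: sumv_ext => i; rewrite /vsub; ring.
Qed.

Lemma inner_scalel a u v : inner (vscale a u) v = a * inner u v.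
Proof. by rewrite /inner -sumv_scale; apply: sumv_ext => i; rewrite /vscale; ring. Qed.

Lemma inner_scaler a u v : inner u (vscale a v) = a * inner u v.
Proof. by rewrite inner_comm inner_scalel inner_comm. Qed.

Lemma inner_sub_sub u v :
  inner (vsub u v) (vsub u v) = inner u u - 2 * inner u v + inner v v.
Proof.
rewrite inner_subl (inner_comm u) (inner_comm v) !inner_subl (inner_comm v u); ring.
Qed.

Lemma vnorm_sq u : vnorm u ^ 2 = inner u u.
Proof. exact: pow2_sqrt (inner_ge0 u). Qed.

Lemma inner_lt_of_vnorm_lt m u : vnorm u < m -> inner u u < m * m.
Proof.
by rewrite -vnorm_sq => lt_m; have := sqrt_pos (inner u u); rewrite /vnorm in lt_m *; nra.
Qed.

Lemma inner_ge_of_vnorm_ge e u : 0 <= e -> e <= vnorm u -> e * e <= inner u u.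
Proof. by rewrite -vnorm_sq => e_ge0 le_e; nra. Qed.

(* A weak Cauchy-Schwarz inequality, from [0 <= |w - m v|^2]. *)
Lemma inner_le_of_sq_lt m w v :
  0 < m -> inner w w < m * m -> inner v v <= 1 -> inner w v <= m.
Proof.
move=> m_gt0 ww vv.
have := inner_ge0 (vsub w (vscale m v)).
by rewrite inner_sub_sub !inner_scaler !inner_scalel => ?; nra.
Qed.

Lemma inner_cenl v : Hyp v -> inner (@cen d) v = 1 / INR d ^ 2.
Proof.
move=> Hv; rewrite /inner (@sumv_ext _ (vscale (1 / INR d ^ 2) v)) //.
by rewrite sumv_scale Hv Rmult_1_r.
Qed.

Lemma Hyp_cen : (0 < d)%nat -> Hyp (@cen d).
Proof.
move=> d_gt0; have : 0 < INR d by apply: lt_0_INR; apply/ltP.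
by rewrite /Hyp /cen sumv_const mult_INR => ?; field; lra.
Qed.

End VectorAlgebra.

Lemma closed_vset_far d (A : vec d -> Prop) x :
  closed_vset A -> ~ A x ->
  exists eps, 0 < eps /\ forall y, A y -> eps <= vnorm (vsub x y).
Proof.
move=> A_closed Ax; apply: NNPP => no_eps; apply/Ax/A_closed => eps eps_gt0.
apply: NNPP => no_y; apply: no_eps; exists eps; split=> // y Ay.
by apply: Rnot_lt_le => near; apply: no_y; exists y.
Qed.

Lemma polar_of_margin d (A : vec d -> Prop) x m z :
  (forall v, A v -> inner v v <= 1) -> 0 < m ->
  (forall v, A v -> 1 / (INR d * (INR d + 1)) + m <= inner x v) ->
  Hyp z -> vnorm (vsub x z) < m -> polar A z.
Proof.
move=> A_le1 m_gt0 margin Hz xz; split=> // v Av.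
have := inner_le_of_sq_lt m_gt0 (inner_lt_of_vnorm_lt xz) (A_le1 v Av).
by rewrite inner_subl; have := margin v Av; lra.
Qed.

Section OutSphere.

Variable d : nat.
Hypothesis d_ge2 : (2 <= d)%nat.
Implicit Types s v : vec d.

Let INR_d_ge2 : 2 <= INR d.
Proof. by apply: (le_INR 2); apply/leP. Qed.

Let INR_d_sq_ge4 : 4 <= INR d ^ 2.
Proof. by nra. Qed.

Lemma r_out_sq : r_out d ^ 2 = (INR d - 1) / (INR d ^ 2 * (INR d + 1)).
Proof. by apply/pow2_sqrt/Rlt_le/Rdiv_lt_0_compat; nra. Qed.

Lemma r_out_gt0 : 0 < r_out d.
Proof. by apply/sqrt_lt_R0/Rdiv_lt_0_compat; nra. Qed.

Lemma r_in_gt0 : 0 < r_in d.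
Proof. by apply/sqrt_lt_R0/Rdiv_lt_0_compat; nra. Qed.

Lemma r_out_r_in : r_out d * r_in d = 1 / (INR d ^ 2 * (INR d + 1)).
Proof.
rewrite /r_out /r_in -sqrt_mult; try by apply/Rlt_le/Rdiv_lt_0_compat; nra.
rewrite -[X in _ = X]sqrt_pow2; last by apply/Rlt_le/Rdiv_lt_0_compat; nra.
by congr sqrt; field; nra.
Qed.

Let cen_Hyp : Hyp (@cen d).
Proof. by apply: Hyp_cen; apply: ltn_trans d_ge2. Qed.

Let lambda := r_in d / r_out d.

Let lambda_gt0 : 0 < lambda.
Proof. by apply: Rdiv_lt_0_compat; [apply: r_in_gt0 | apply: r_out_gt0]. Qed.

Lemma inner_sub_cen_S_out s :
  S_out s -> inner (vsub s (@cen d)) (vsub s (@cen d)) = r_out d ^ 2.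
Proof. by case=> _ sc; rewrite -vnorm_sq sc. Qed.

Lemma inner_S_out s : S_out s -> inner s s = 2 / (INR d * (INR d + 1)).
Proof.
move=> s_out; have := inner_sub_cen_S_out s_out.
rewrite inner_sub_sub (inner_comm s) !inner_cenl //; last by case: s_out.
rewrite r_out_sq => E.
have -> : inner s s = (INR d - 1) / (INR d ^ 2 * (INR d + 1)) + 1 / INR d ^ 2 by lra.
by field; nra.
Qed.

Lemma Hyp_ray s t : Hyp s -> Hyp (ray s t).
Proof.
move: cen_Hyp; rewrite /Hyp /ray !sumv_sub sumv_scale sumv_sub => -> ->; ring.
Qed.

Lemma inner_ray s t v : S_out s -> Hyp v ->
  inner (ray s t) v = 1 / (INR d * (INR d + 1)) + (r_out d * r_in d - t * r_out d ^ 2)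
    + t / 2 * (inner (vsub s v) (vsub s v) + (2 / (INR d * (INR d + 1)) - inner v v)).
Proof.
move=> s_out Hv.
rewrite /ray inner_subl inner_scalel inner_subl inner_cenl // inner_sub_sub.
rewrite (inner_S_out s_out) r_out_r_in r_out_sq.
by field; nra.
Qed.

Lemma polar_point_ray s : S_out s -> polar_point s = ray s lambda.
Proof.
case=> _ sc; have ro_gt0 := r_out_gt0.
rewrite /polar_point /ray /vsub /vscale sc /lambda.
by have -> : r_out d * r_in d / r_out d ^ 2 = r_in d / r_out d by field; lra.
Qed.

Lemma vnorm_ray_shift s t e : S_out s -> 0 <= e ->
  vnorm (vsub (ray s t) (ray s (t + e))) = e * r_out d.
Proof.
move=> s_out e_ge0; rewrite /vnorm -[e * _]sqrt_pow2; last by have := r_out_gt0; nra.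
congr sqrt.
rewrite (@inner_ext _ _ (vscale e (vsub s (@cen d))) _ (vscale e (vsub s (@cen d))));
  try by move=> i; rewrite /ray /vsub /vscale; ring.
by rewrite inner_scalel inner_comm inner_scalel inner_sub_cen_S_out //; ring.
Qed.

Section Germ.

Variable G : vec d -> Prop.
Hypothesis G_germ : germ G.

Lemma germ_inner_le v : G v -> inner v v <= 2 / (INR d * (INR d + 1)).
Proof. by move=> Gv; case: G_germ => _ /(_ v v Gv Gv) []. Qed.

Lemma germ_inner_le1 v : G v -> inner v v <= 1.
Proof.
move=> /germ_inner_le; suff : 2 / (INR d * (INR d + 1)) <= 1 by lra.
by apply: (Rmult_le_reg_r (INR d * (INR d + 1))); [nra | field_simplify; nra].
Qed.

Lemma polar_point_margin s v : S_out s -> G v ->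
  1 / (INR d * (INR d + 1)) + lambda / 2 * inner (vsub s v) (vsub s v)
    <= inner (polar_point s) v.
Proof.
move=> s_out Gv; have Hv : Hyp v by case: G_germ => /(_ v Gv) [].
rewrite polar_point_ray // inner_ray //.
have ro_gt0 := r_out_gt0.
have -> : r_out d * r_in d - lambda * r_out d ^ 2 = 0 by rewrite /lambda; field; lra.
by have := germ_inner_le Gv; have := inner_ge0 (vsub s v); nra.
Qed.

Lemma polar_point_mem s : S_out s -> polar G (polar_point s).
Proof.
move=> s_out; split; first by rewrite polar_point_ray //; apply: Hyp_ray; case: s_out.
move=> v Gv; have := polar_point_margin s_out Gv.
by have := inner_ge0 (vsub s v); nra.
Qed.

Lemma ray_notin_polar s t : S_out s -> G s -> lambda < t -> ~ polar G (ray s t).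
Proof.
move=> s_out Gs lt_t [_ /(_ s Gs)].
have Hs : Hyp s by case: s_out.
rewrite inner_ray // (inner_S_out s_out) inner_sub_sub (inner_S_out s_out).
have ro_gt0 := r_out_gt0.
have -> : r_out d * r_in d = lambda * r_out d ^ 2 by rewrite /lambda; field; lra.
have : 0 < (t - lambda) * r_out d ^ 2 by apply: Rmult_lt_0_compat; [lra | apply: pow_lt].
by lra.
Qed.

Lemma rel_boundary_polar_point s : S_out s -> G s ->
  rel_boundary_H (polar G) (polar_point s).
Proof.
move=> s_out Gs; have pG := polar_point_mem s_out.
have s_ray := polar_point_ray s_out; have ro_gt0 := r_out_gt0.
split=> [|eps eps_gt0]; first by case: pG.
split.
- exists (polar_point s); split; first by case: pG.
  split=> //; have := vnorm_ray_shift lambda s_out (Rle_refl 0).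
  by rewrite Rplus_0_r Rmult_0_l -s_ray => ->.
- rewrite s_ray; exists (ray s (lambda + eps / (2 * r_out d))).
  have e_gt0 : 0 < eps / (2 * r_out d) by apply: Rdiv_lt_0_compat; lra.
  split; first by apply: Hyp_ray; case: s_out.
  split; first by apply: ray_notin_polar => //; lra.
  by rewrite vnorm_ray_shift; [field_simplify; lra | | lra].
Qed.

Hypothesis G_closed : closed_vset G.

Lemma mem_germ_of_rel_boundary s : S_out s ->
  rel_boundary_H (polar G) (polar_point s) -> G s.
Proof.
move=> s_out [_ boundary]; apply: NNPP => Gs.
have [eps [eps_gt0 far]] := closed_vset_far G_closed Gs.
have m_gt0 : 0 < lambda / 2 * (eps * eps) by apply: Rmult_lt_0_compat; nra.
have [_ [z [Hz [z_notin sz]]]] := boundary _ m_gt0.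
apply/z_notin/(polar_of_margin germ_inner_le1 m_gt0 _ Hz sz) => v Gv.
have := polar_point_margin s_out Gv.
have := inner_ge_of_vnorm_ge (Rlt_le _ _ eps_gt0) (far v Gv).
by nra.
Qed.

End Germ.

End OutSphere.

Theorem mainTheorem7 (d : nat) (hd : (2 <= d)%nat)
  (G : vec d -> Prop) (hG : germ G) (hGc : closed_vset G)
  (s : vec d) (hs : S_out s) :
  G s <-> rel_boundary_H (polar G) (polar_point s).
Proof.
split.
- exact: rel_boundary_polar_point.
- exact: mem_germ_of_rel_boundary.
Qed.
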